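(* Let $m=2k+1$ with $k\in\mathbb{N}$. For every $\beta\in(\frac{k+1+\sqrt{k^2+6k+5}}{2},m+1]$ there exists $x\in(0,\frac{m}{\beta-1})$ with a unique $\beta$-expansion, i.e. $|\Sigma_{\beta,m}(x)|=1$.
   Context: $\Sigma_{\beta,m}(x)=\{(\epsilon_i)_{i=1}^\infty\in\{0,\ldots,m\}^{\mathbb{N}}:\sum_{i\ge1}\epsilon_i\beta^{-i}=x\}$; its elements are the $\beta$-expansions of $x$. *)

From Stdlib Require Import Reals.
From Coquelicot Require Import Coquelicot.
Open Scope R_scope.

(* A digit sequence eps : nat -> nat is indexed from 0; eps n plays the role of
   the paper's epsilon_{n+1}, so the term eps n * beta^{-(n+1)} matches
   epsilon_i beta^{-i} with i = n+1. *)
Definition is_beta_expansion (beta : R) (m : nat) (x : R) (eps : nat -> nat) : Prop :=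
  (forall n, (eps n <= m)%nat) /\
  is_series (fun n => INR (eps n) / beta ^ (n + 1)) x.

Definition unique_expansion (beta : R) (m : nat) (x : R) : Prop :=
  exists eps, is_beta_expansion beta m x eps /\
    forall eps', is_beta_expansion beta m x eps' -> eps' = eps.

(** The periodic sequence [(k+1) k (k+1) k ...] works.  Its tails take only the
    two values [a] and [b], with [a (beta^2 - 1) = (k+1) beta + k],
    [b (beta^2 - 1) = k beta + k + 1] and [a + b = m/(beta-1)].  The lower bound
    on [beta] says exactly that [beta^2 - (k+1) beta - (k+1) > 0], i.e. [a, b < 1],
    hence also [a, b > m/(beta-1) - 1].  A tail in [(m/(beta-1) - 1, 1)] forces the
    next digit: a larger digit would leave a negative remainder, a smaller one a
    remainder above [m/(beta-1)].  So every digit of any expansion of [a] is forced. *)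

From Stdlib Require Import Reals Lra Lia Psatz FunctionalExtensionality.
From Coquelicot Require Import Coquelicot.
From Corelib Require Import ssreflect.
Open Scope R_scope.

Lemma digit_determined (M t t' : R) (c c' : nat) :
  0 <= t' <= M -> M - 1 < t < 1 -> INR c + t = INR c' + t' -> c = c'.
Proof.
  move=> Ht' Ht Hsum.
  case: (Nat.lt_total c c') => [Hlt | [// | Hgt]].
  - have := le_INR _ _ Hlt; rewrite S_INR; lra.
  - have := le_INR _ _ Hgt; rewrite S_INR; lra.
Qed.

Section Tails.

Variables (beta : R) (m : nat).
Hypothesis beta_gt1 : 1 < beta.

Definition tail (d : nat -> nat) (n : nat) : R :=
  Series (fun i => INR (d (n + i)%nat) / beta ^ (i + 1)).

Lemma is_series_max_digits :
  is_series (fun i => INR m / beta ^ (i + 1)) (INR m / (beta - 1)).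
Proof.
  have Hq : Rabs (/ beta) < 1.
  { rewrite Rabs_pos_eq; last by left; apply Rinv_0_lt_compat; lra.
    rewrite -Rinv_1; apply Rinv_lt_contravar; lra. }
  have := is_series_scal_l (INR m / beta) _ _ (is_series_geom _ Hq).
  have -> : scal (INR m / beta) (/ (1 - / beta)) = INR m / (beta - 1).
  { rewrite /scal /= /mult /=; field; lra. }
  apply is_series_ext => i.
  rewrite /scal /= /mult /= pow_add pow_1 pow_inv.
  field; split; try apply pow_nonzero; lra.
Qed.

Section Digits.

Variable d : nat -> nat.
Hypothesis d_le : forall n, (d n <= m)%nat.

Lemma tail_term_bounds n i :
  0 <= INR (d (n + i)%nat) / beta ^ (i + 1) <= INR m / beta ^ (i + 1).
Proof.
  have Hp : 0 < beta ^ (i + 1) by apply pow_lt; lra.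
  split; first by apply: Rdiv_le_0_compat; [apply pos_INR | lra].
  apply: Rmult_le_compat_r; [left; exact: Rinv_0_lt_compat | apply/le_INR/d_le].
Qed.

Lemma ex_series_tail n :
  ex_series (fun i => INR (d (n + i)%nat) / beta ^ (i + 1)).
Proof.
  apply: (@ex_series_le R_AbsRing R_CompleteNormedModule _
            (fun i => INR m / beta ^ (i + 1))).
  - move=> i; rewrite /norm /= /abs /=.
    have [? ?] := tail_term_bounds n i; rewrite Rabs_pos_eq; lra.
  - eexists; exact: is_series_max_digits.
Qed.

Lemma tail_bounds n : 0 <= tail d n <= INR m / (beta - 1).
Proof.
  split.
  - have -> : 0 = Series (fun _ => 0 * 0) by rewrite Series_scal_l; ring.
    apply: Series_le; last exact: ex_series_tail.
    move=> i; have := tail_term_bounds n i; lra.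
  - rewrite -(is_series_unique _ _ is_series_max_digits).
    apply: Series_le; first by move=> i; exact: tail_term_bounds.
    eexists; exact: is_series_max_digits.
Qed.

Lemma tail_S n : tail d n = (INR (d n) + tail d (S n)) / beta.
Proof.
  rewrite /tail Series_incr_1; last exact: ex_series_tail.
  rewrite Nat.add_0_r /=.
  rewrite (Series_ext _ (fun i => / beta * (INR (d (S (n + i))) / beta ^ (i + 1)))).
  - rewrite Series_scal_l; field; lra.
  - move=> i; rewrite Nat.add_succ_r /=; field; split; [apply pow_nonzero|]; lra.
Qed.

Lemma is_beta_expansion_tail0 : is_beta_expansion beta m (tail d 0) d.
Proof. split; [exact: d_le | exact: Series_correct (ex_series_tail 0)]. Qed.

Lemma tail_two_periodic n :
  (forall j, d (S (S j)) = d j) ->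
  tail d n * (beta ^ 2 - 1) = INR (d n) * beta + INR (d (S n)).
Proof.
  move=> Hper.
  have Hback : tail d (S (S n)) = tail d n.
  { by rewrite /tail; apply: Series_ext => i; rewrite /= Hper. }
  have E0 : tail d n * beta = INR (d n) + tail d (S n).
  { rewrite tail_S; field; lra. }
  have E1 : tail d (S n) * beta = INR (d (S n)) + tail d n.
  { rewrite tail_S Hback; field; lra. }
  nra.
Qed.

End Digits.

Lemma tail_determined (d d' : nat -> nat) (n : nat) :
  (forall j, (d j <= m)%nat) -> (forall j, (d' j <= m)%nat) ->
  INR m / (beta - 1) - 1 < tail d (S n) < 1 ->
  tail d' n = tail d n -> d' n = d n /\ tail d' (S n) = tail d (S n).
Proof.
  move=> d_le d'_le Hgap Heq.
  have Hsum : INR (d n) + tail d (S n) = INR (d' n) + tail d' (S n).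
  { rewrite (tail_S _ d_le) (tail_S _ d'_le) in Heq.
    apply: (Rmult_eq_reg_r (/ beta)); first exact: (eq_sym Heq).
    apply: Rinv_neq_0_compat; lra. }
  have Hdig := digit_determined _ _ _ _ _ (tail_bounds _ d'_le (S n)) Hgap Hsum.
  split; [done | rewrite Hdig in Hsum; lra].
Qed.

Lemma unique_expansion_of_tails_in_gap (d : nat -> nat) :
  (forall n, (d n <= m)%nat) ->
  (forall n, INR m / (beta - 1) - 1 < tail d n < 1) ->
  unique_expansion beta m (tail d 0).
Proof.
  move=> d_le Hgap; exists d; split; first exact: is_beta_expansion_tail0 d_le.
  move=> d' [d'_le Hser].
  have Htail : forall n, tail d' n = tail d n.
  { elim=> [|n IH]; first exact: is_series_unique.
    exact: (proj2 (tail_determined _ _ _ d_le d'_le (Hgap (S n)) IH)). }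
  apply: functional_extensionality => n.
  exact: (proj1 (tail_determined _ _ _ d_le d'_le (Hgap (S n)) (Htail n))).
Qed.

End Tails.

Definition alternating_digits (k n : nat) : nat :=
  if Nat.even n then S k else k.

Lemma alternating_digits_periodic k j :
  alternating_digits k (S (S j)) = alternating_digits k j.
Proof. by []. Qed.

Lemma alternating_digits_add_succ k n :
  (alternating_digits k n + alternating_digits k (S n) = 2 * k + 1)%nat.
Proof.
  rewrite /alternating_digits Nat.even_succ -Nat.negb_even.
  case: (Nat.even n) => /=; lia.
Qed.

Lemma alternating_digits_le k n : (alternating_digits k n <= S k)%nat.
Proof. rewrite /alternating_digits; case: (Nat.even n); lia. Qed.

Section AlternatingTails.

Variables (k : nat) (beta : R).
Hypothesis beta_gt1 : 1 < beta.

Local Notation m := (2 * k + 1)%nat.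
Local Notation d := (alternating_digits k).

Lemma alternating_digits_le_max n : (d n <= m)%nat.
Proof. have := alternating_digits_add_succ k n; lia. Qed.

Lemma alternating_tail_eq n :
  tail beta d n * (beta ^ 2 - 1) = INR (d n) * beta + INR (d (S n)).
Proof.
  exact: (tail_two_periodic _ _ beta_gt1 _ alternating_digits_le_max n
            (alternating_digits_periodic k)).
Qed.

Lemma alternating_tail_add_succ n :
  tail beta d n + tail beta d (S n) = INR m / (beta - 1).
Proof.
  apply: (Rmult_eq_reg_r (beta ^ 2 - 1)); last nra.
  rewrite Rmult_plus_distr_r !alternating_tail_eq alternating_digits_periodic.
  rewrite -(alternating_digits_add_succ k n) plus_INR; field; lra.
Qed.

Lemma alternating_tail_bounds n :
  (INR k + 1) * beta + INR k < beta ^ 2 - 1 -> 0 < tail beta d n < 1.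
Proof.
  move=> Hquad.
  have Htail := alternating_tail_eq n.
  have Hsum := f_equal INR (alternating_digits_add_succ k n).
  have Hdn : INR (d n) <= INR k + 1 by rewrite -S_INR; exact/le_INR/alternating_digits_le.
  have Hk := pos_INR k; have Hdn0 := pos_INR (d n); have HdSn0 := pos_INR (d (S n)).
  rewrite !plus_INR /= in Hsum.
  split; apply: (Rmult_lt_reg_r (beta ^ 2 - 1)); nra.
Qed.

End AlternatingTails.

Lemma quadratic_of_root_lt (k : nat) (beta : R) :
  (INR k + 1 + sqrt (INR k ^ 2 + 6 * INR k + 5)) / 2 < beta ->
  1 < beta /\ (INR k + 1) * beta + INR k < beta ^ 2 - 1.
Proof.
  set s := sqrt _ => Hlo.
  have Hk := pos_INR k.
  have Hs : s * s = INR k ^ 2 + 6 * INR k + 5 by apply: sqrt_sqrt; nra.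
  have Hs0 : 0 <= s by apply: sqrt_pos.
  have Hs2 : 2 <= s by nra.
  split; nra.
Qed.

Theorem proposition3p7 (k : nat) (beta : R) :
  let m := (2 * k + 1)%nat in
  (INR k + 1 + sqrt (INR k ^ 2 + 6 * INR k + 5)) / 2 < beta ->
  beta <= INR m + 1 ->
  exists x : R, 0 < x /\ x < INR m / (beta - 1) /\ unique_expansion beta m x.
Proof.
  move=> m /quadratic_of_root_lt [Hbeta1 Hquad] _.
  have Hbounds n := alternating_tail_bounds k beta Hbeta1 n Hquad.
  have Hadd n := alternating_tail_add_succ k beta Hbeta1 n.
  exists (tail beta (alternating_digits k) 0); split; [|split].
  - exact: (proj1 (Hbounds 0%nat)).
  - rewrite -(Hadd 0%nat); have := Hbounds 1%nat; lra.
  - apply: (unique_expansion_of_tails_in_gap _ _ Hbeta1 _ (alternating_digits_le_max k)) => n.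
    have := Hbounds n; have := Hbounds (S n); rewrite -(Hadd n); lra.
Qed.
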